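(* Let $a,b,c,k$ be nonnegative integers with $a+b+c\le k$, and let $\overleftrightarrow{G}$ be a finite directed ordered graph such that the largest right oriented ordered matching contained in $\overleftrightarrow{G}$ as a subgraph has size at most $a$, the largest left oriented ordered matching contained in it has size at most $b$, and the largest directed ordered matching contained in it has size at most $c$. Then $\chi(\overleftrightarrow{G})\le 2(a+b+c)+1$.
   Context: A directed ordered graph is a finite ordered graph (undirected simple graph with a linear order on its vertices) in which each edge $\{u,v\}$ is replaced by either one arc ($(u,v)$ or $(v,u)$) or both arcs. The right oriented ordered matching $M^R_t$ has vertices $a_1<b_1<\dots<a_t<b_t$ and arcs $(a_i,b_i)$; the left oriented ordered matching $M^L_t$ has the same vertices and arcs $(b_i,a_i)$; the directed ordered matching $M^D_t$ has the same vertices and both arcs $(a_i,b_i),(b_i,a_i)$ for each $i$. A directed ordered graph contains one of these as a subgraph if there is an injective order-preserving map of its vertices into $\overleftrightarrow{G}$ sending arcs to arcs. $\chi(\overleftrightarrow{G})$ denotes the minimum $n$ such that there is a map $f$ from the vertices of $\overleftrightarrow{G}$ to those of $\overleftrightarrow{K}_n$ (the complete ordered graph on $n$ vertices with all edges oriented both ways) with $f(u)\le f(v)$ whenever $u\le v$ and $(f(u),f(v))$ an arc whenever $(u,v)$ is an arc. *)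

From mathcomp Require Import all_boot.
Set Implicit Arguments. Unset Strict Implicit. Unset Printing Implicit Defensive.

(* A finite directed ordered graph on vertices 0 < 1 < ... < n-1 ('I_n with the
   natural order).  The arc relation is loopless (the underlying graph is simple);
   each edge may carry one arc or both arcs, so any irreflexive relation is allowed. *)
Record dograph (n : nat) := DOGraph { darc : rel 'I_n; arc_irr : irreflexive darc }.

Definition contains (m n : nat) (H : rel 'I_m) (G : rel 'I_n) : Prop :=
  exists f : 'I_m -> 'I_n,
    (forall u v : 'I_m, (u < v)%N -> (f u < f v)%N) /\
    (forall u v : 'I_m, H u v -> G (f u) (f v)).

(* Matchings on vertices 0<1<...<2t-1, with a_i = 2i, b_i = 2i+1. *)
Definition MR (t : nat) : rel 'I_(2 * t) :=
  fun u v => ~~ odd u && (v == u.+1 :> nat).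
Definition ML (t : nat) : rel 'I_(2 * t) :=
  fun u v => ~~ odd v && (u == v.+1 :> nat).
Definition MD (t : nat) : rel 'I_(2 * t) :=
  fun u v => MR u v || ML u v.

(* f : 'I_n -> 'I_m is a homomorphism of G into the complete ordered graph K_m
   with all edges oriented both ways (arcs (i,j) for all i <> j). *)
Definition colb (n : nat) (G : dograph n) (m : nat) : bool :=
  [exists f : {ffun 'I_n -> 'I_m},
     [forall u : 'I_n, forall v : 'I_n,
        ((u <= v)%N ==> (f u <= f v)%N) && (darc G u v ==> (f u != f v))]].

Lemma colb_exists (n : nat) (G : dograph n) : exists m, colb G m.
Proof.
exists n; apply/existsP; exists [ffun u => u].
apply/forallP => u; apply/forallP => v; rewrite !ffunE.
apply/andP; split; first by apply/implyP.
apply/implyP => Huv; apply/negP => /eqP E; subst v.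
by rewrite (arc_irr G) in Huv.
Qed.

Definition chi (n : nat) (G : dograph n) : nat := ex_minn (colb_exists G).

From mathcomp Require Import all_boot zify.
Set Implicit Arguments. Unset Strict Implicit. Unset Printing Implicit Defensive.

(* Cut the vertex order greedily into consecutive independent intervals, each
   as long as possible, and colour the intervals 0, 1, 2, ... in order: this is
   an ordered homomorphism into the complete ordered graph.  Every interval but
   the last is stopped by an arc joining a vertex inside it to the vertex right
   after it.  Keeping these arcs only for every second interval makes them
   vertex-disjoint and ordered one after the other, i.e. an ordered matching;
   its forward arcs form a right and its backward arcs a left oriented ordered
   matching, so there are at most a + b of them and at most 2(a + b) + 1
   intervals. *)

Definition nat_rel n (R : rel 'I_n) : rel nat :=
  fun x y => if (insub x, insub y) is (Some u, Some v) then R u v else false.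

Lemma nat_relE n (R : rel 'I_n) (u v : 'I_n) : nat_rel R u v = R u v.
Proof. by rewrite /nat_rel !valK. Qed.

Lemma nat_rel_irr n (R : rel 'I_n) : irreflexive R -> irreflexive (nat_rel R).
Proof. by move=> R_irr x; rewrite /nat_rel; case: insub. Qed.

Lemma nat_rel_flip n (R : rel 'I_n) x y :
  nat_rel (fun u v => R v u) x y = nat_rel R y x.
Proof. by rewrite /nat_rel; case: (insub x); case: (insub y). Qed.

Section GreedyColouring.

Variables (n : nat) (E : rel nat).
Hypothesis E_irr : irreflexive E.

Definition indep s t :=
  all (fun x => all (fun y => ~~ E x y) (index_iota s t)) (index_iota s t).

Lemma indepP s t : reflect {in index_iota s t &, forall x y, ~~ E x y} (indep s t).
Proof.
apply: (iffP allP) => [ind x y xI yI | ind x xI]; first exact: (allP (ind x xI)).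
by apply/allP => y yI; apply: ind.
Qed.

Lemma indep_nil s : indep s s.
Proof. by rewrite /indep /index_iota subnn. Qed.

Lemma indepS_conflict s t :
  indep s t -> ~~ indep s t.+1 -> exists2 x, s <= x < t & E x t || E t x.
Proof.
move=> /indepP ind /allPn[x + /allPn[y +]]; rewrite !mem_index_iota !ltnS negbK.
move=> /andP[sx xt] /andP[sy yt] Exy.
have [xt'|xt'] := ltnP x t; have [yt'|yt'] := ltnP y t.
- by move: (ind x y); rewrite !mem_index_iota sx sy xt' yt' Exy => /(_ isT isT).
- by exists x; [rewrite sx xt' | rewrite -(_ : y = t) ?Exy //; lia].
- by exists y; [rewrite sy yt' | rewrite -(_ : x = t) ?Exy ?orbT //; lia].
- by move: Exy; rewrite (_ : x = y) ?E_irr //; lia.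
Qed.

Lemma indep_prefix s : s <= n -> exists t,
  [/\ s <= t <= n, s < n -> s < t, indep s t
    & t < n -> exists2 x, s <= x < t & E x t || E t x].
Proof.
move=> sn.
have ex_t : exists t, (t <= n) && indep s t by exists s; rewrite sn indep_nil.
have ub_t t : (t <= n) && indep s t -> t <= n by case/andP.
case: (ex_maxnP ex_t ub_t) => t /andP[tn ind] t_max.
have st : s <= t by apply: t_max; rewrite sn indep_nil.
have conflict : t < n -> exists2 x, s <= x < t & E x t || E t x.
  move=> lt_tn; apply: indepS_conflict => //.
  by apply/negP => ind'; move: (t_max t.+1); rewrite lt_tn ind' ltnn => /(_ isT).
exists t; split=> //; first by rewrite st.
move=> lt_sn; have [/conflict[x /andP[sx xt] _]|] := ltnP t n; first lia.
by move/(leq_trans lt_sn).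
Qed.

Definition colouring s (col : nat -> nat) m :=
  [/\ {in index_iota s n &, {homo col : x y / x <= y}},
      {in index_iota s n &, forall x y, E x y -> col x != col y}
    & {in index_iota s n, forall x, col x < m}].

Lemma colouring_nil col m : colouring n col m.
Proof. by rewrite /colouring /index_iota subnn. Qed.

Lemma colouring_cons s t col m : indep s t -> colouring t col m ->
  colouring s (fun z => if z < t then 0 else (col z).+1) m.+1.
Proof.
move=> /indepP ind [mono proper bound].
have mem_suffix z : s <= z < n -> ~~ (z < t) -> z \in index_iota t n.
  by rewrite mem_index_iota; lia.
have mem_prefix z : s <= z < n -> z < t -> z \in index_iota s t.
  by rewrite mem_index_iota; lia.
split=> [x y|x y|x]; rewrite ?mem_index_iota.
- move=> xI yI xy; case: ifP => // xt; case: ifP => yt; first lia.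
  by rewrite ltnS mono ?mem_suffix ?xt ?yt.
- move=> xI yI Exy; case: ifP => xt; case: ifP => yt //.
  + by move: (ind x y (mem_prefix x xI xt) (mem_prefix y yI yt)); rewrite Exy.
  + by rewrite eqSS proper ?mem_suffix ?xt ?yt.
- by move=> xI; case: ifP => xt //; rewrite ltnS bound ?mem_suffix ?xt.
Qed.

Definition ladder (L : seq (nat * nat)) :=
  pairwise (fun p q : nat * nat => p.2 < q.1) L
  && all (fun p : nat * nat => p.1 < p.2 < n) L.

Lemma ladder_cons x y L : x < y < n -> all (fun p : nat * nat => y < p.1) L ->
  ladder L -> ladder ((x, y) :: L).
Proof. by rewrite /ladder /= => -> -> /andP[-> ->]. Qed.

Lemma greedy_colouring s : s <= n -> exists col L,
  [/\ colouring s col (2 * size L).+1, ladder L,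
      all (fun p : nat * nat => s <= p.1) L
    & all (fun p : nat * nat => E p.1 p.2 || E p.2 p.1) L].
Proof.
have [d] := ubnP (n - s); elim: d s => // d IH s lt_d sn.
have [t1 [/andP[st1 t1n] _ ind1 conflict1]] := indep_prefix sn.
have [lt_t1n|ge_t1n] := ltnP t1 n; last first.
  have eq_t1n : t1 = n by apply/eqP; rewrite eqn_leq t1n ge_t1n.
  subst t1; exists (fun z => if z < n then 0 else 1), [::]; split=> //.
  exact: (colouring_cons (col := fun=> 0) ind1 (colouring_nil _ 0)).
have [x1 /andP[sx1 x1t1] adj1] := conflict1 lt_t1n.
have [t2 [/andP[_ t2n] lt_t1t2 ind2 _]] := indep_prefix (ltnW lt_t1n).
have {}lt_t1t2 := lt_t1t2 lt_t1n.
have lt_d' : n - t2 < d by lia.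
have [col [L [colL ladL lbL adjL]]] := IH t2 lt_d' t2n.
exists (fun z => if z < t1 then 0 else (if z < t2 then 0 else (col z).+1).+1).
exists ((x1, t1) :: L); split.
- rewrite /= mulnS add2n; exact: (colouring_cons ind1 (colouring_cons ind2 colL)).
- apply: ladder_cons ladL; first by rewrite x1t1.
  by apply: sub_all lbL => p /=; apply: leq_trans.
- by rewrite /= sx1; apply: sub_all lbL => p /=; lia.
- by rewrite /= adj1.
Qed.

End GreedyColouring.

Definition ladder_vertex (L : seq (nat * nat)) i :=
  let p := nth (0, 0) L i./2 in if odd i then p.2 else p.1.

Lemma ladder_vertex_lt n L i : ladder n L -> i < 2 * size L -> ladder_vertex L i < n.
Proof.
case/andP=> _ /all_nthP-/(_ (0, 0) i./2) bnd lt_i.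
have /bnd /andP[lt12 lt2n] : i./2 < size L by rewrite ltn_half_double -mul2n.
by rewrite /ladder_vertex; case: odd => //; apply: ltn_trans lt2n.
Qed.

Lemma ladder_vertex_increasing n L i j : ladder n L -> i < j < 2 * size L ->
  ladder_vertex L i < ladder_vertex L j.
Proof.
case/andP=> /(pairwiseP (0, 0)) ordered /all_nthP-/(_ (0, 0)) bnd /andP[ij lt_j].
have half_lt k : k < 2 * size L -> k./2 < size L by rewrite ltn_half_double -mul2n.
have lt_hi := half_lt i (ltn_trans ij lt_j); have lt_hj := half_lt j lt_j.
have /andP[lt_i12 _] := bnd _ lt_hi; have /andP[lt_j12 _] := bnd _ lt_hj.
rewrite /ladder_vertex; have [hij|hji|hij] := ltngtP i./2 j./2.
- have := ordered _ _ lt_hi lt_hj hij.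
  by case: (odd i); case: (odd j) => /=; lia.
- by move: (half_leq (ltnW ij)); rewrite leqNgt hji.
- move: (odd_double_half i) (odd_double_half j); rewrite hij.
  by case: (odd i); case: (odd j) => /=; lia.
Qed.

Lemma contains_MR_ladder n (R : rel 'I_n) L :
  ladder n L -> all (fun p : nat * nat => nat_rel R p.1 p.2) L ->
  contains (@MR (size L)) R.
Proof.
move=> ladL arcs.
have lt_n (u : 'I_(2 * size L)) : ladder_vertex L u < n.
  exact: ladder_vertex_lt ladL (ltn_ord u).
exists (fun u => Ordinal (lt_n u)); split=> [u v uv|u v].
  by apply: ladder_vertex_increasing ladL _; rewrite uv ltn_ord.
case/andP=> even_u /eqP v_def; rewrite -nat_relE /= /ladder_vertex v_def /=.
rewrite uphalf_half (negbTE even_u) /=.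
by apply: (all_nthP (0, 0) arcs); rewrite ltn_half_double -mul2n.
Qed.

Lemma contains_ML_flip n t (R : rel 'I_n) :
  contains (@MR t) (fun u v => R v u) -> contains (@ML t) R.
Proof. by case=> f [mono arcs]; exists f; split=> // u v /arcs. Qed.

Lemma ladder_filter n (a : pred (nat * nat)) L : ladder n L -> ladder n (filter a L).
Proof.
case/andP=> ordered bnd; rewrite /ladder pairwise_filter //.
by rewrite all_filter; apply: sub_all bnd => p /= ->; rewrite implybT.
Qed.

Lemma colb_of_colouring n (G : dograph n) col m :
  colouring n (nat_rel (darc G)) 0 col m -> colb G m.
Proof.
case=> mono proper bound.
have mem_n (u : 'I_n) : val u \in index_iota 0 n by rewrite mem_index_iota ltn_ord.
apply/existsP; exists [ffun u => Ordinal (bound _ (mem_n u))].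
apply/forallP=> u; apply/forallP=> v; rewrite !ffunE /=.
apply/andP; split; apply/implyP; first exact: mono (mem_n u) (mem_n v).
by move=> Guv; rewrite -val_eqE /= proper ?mem_n ?nat_relE.
Qed.

Lemma chi_le n (G : dograph n) m : colb G m -> chi G <= m.
Proof. by rewrite /chi; case: ex_minnP => m0 _; apply. Qed.

Theorem corollary2 (a b c k : nat) (n : nat) (G : dograph n) :
  (a + b + c <= k)%N ->
  (forall t : nat, contains (@MR t) (darc G) -> (t <= a)%N) ->
  (forall t : nat, contains (@ML t) (darc G) -> (t <= b)%N) ->
  (forall t : nat, contains (@MD t) (darc G) -> (t <= c)%N) ->
  (chi G <= 2 * (a + b + c) + 1)%N.
Proof.
move=> _ right_bound left_bound _.
pose forward (p : nat * nat) := nat_rel (darc G) p.1 p.2.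
have [col [L [colL ladL _ adjL]]] :=
  greedy_colouring (nat_rel_irr (@arc_irr _ G)) (leq0n n).
have size_fw : size (filter forward L) <= a.
  apply/right_bound/contains_MR_ladder; first exact: ladder_filter.
  exact: filter_all.
have size_bw : size (filter (predC forward) L) <= b.
  apply/left_bound/contains_ML_flip/contains_MR_ladder; first exact: ladder_filter.
  rewrite all_filter; apply/allP=> p pL /=; rewrite nat_rel_flip.
  by rewrite /forward; case/orP: (allP adjL p pL) => ->; rewrite ?implybT.
have := count_predC forward L; rewrite -!size_filter => size_L.
apply: leq_trans (chi_le (colb_of_colouring colL)) _; lia.
Qed.
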